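(* In an operational probabilistic theory, let $\mathrm{A},\mathrm{B}$ be systems with $\mathsf{Transf}_{\mathbb{R}}(\mathrm{A}\to\mathrm{B})$ finite-dimensional. Then there exist an integer $N\ge1$, systems $\mathrm{E}_1,\dots,\mathrm{E}_N$ and states $\rho_i\in\mathsf{St}(\mathrm{A}\otimes\mathrm{E}_i)$, $i=1,\dots,N$, such that $(\rho_1,\dots,\rho_N)$ is tomographically faithful for $\mathsf{Transf}(\mathrm{A}\to\mathrm{B})$.
   Context: Operational probabilistic theory: systems closed under $\otimes$; sets $\mathsf{Transf}(\mathrm{A}\to\mathrm{B})$ closed under $\circ$ and $\otimes$; states $\mathsf{St}(\mathrm{A})$ spanning a real vector space $\mathsf{St}_{\mathbb{R}}(\mathrm{A})$; transformations identified when they give equal probabilities in all circuits. A transformation $\mathcal{T}$ is identified with the family of linear maps $\widehat{\mathcal{T}\otimes\mathcal{I}_{\mathrm{E}}}:\mathsf{St}_{\mathbb{R}}(\mathrm{A}\otimes\mathrm{E})\to\mathsf{St}_{\mathbb{R}}(\mathrm{B}\otimes\mathrm{E})$ over all systems $\mathrm{E}$, and $\mathsf{Transf}_{\mathbb{R}}(\mathrm{A}\to\mathrm{B})$ is the real vector space spanned by transformations in this representation (no local tomography is assumed). A tuple $(\rho_1,\dots,\rho_N)$ with $\rho_i\in\mathsf{St}(\mathrm{A}\otimes\mathrm{E}_i)$ is tomographically faithful for $\mathsf{Transf}(\mathrm{A}\to\mathrm{B})$ if for all $\mathcal{T},\mathcal{T}'\in\mathsf{Transf}(\mathrm{A}\to\mathrm{B})$,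 $(\mathcal{T}'\otimes\mathcal{I}_{\mathrm{E}_i})(\rho_i)=(\mathcal{T}\otimes\mathcal{I}_{\mathrm{E}_i})(\rho_i)$ for all $i$ implies $\mathcal{T}'=\mathcal{T}$. *)

From HB Require Import structures.
From mathcomp Require Import all_boot all_order all_algebra.
From mathcomp Require Import reals.
Set Implicit Arguments. Unset Strict Implicit. Unset Printing Implicit Defensive.
Import Order.TTheory GRing.Theory Num.Theory.
Local Open Scope ring_scope.

(* An operational probabilistic theory, in the linear representation used by
   the paper: each system A has a real vector space St_R(A) spanned by its
   states St(A) (assumed nonempty), systems are closed under tensor, and a
   transformation A -> B is identified with the family of linear maps
   (T (x) I_E)^ : St_R(A (x) E) -> St_R(B (x) E), indexed by all systems E. *)
Record OPT (R : realType) := MkOPT {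
  Sys : Type;
  tens : Sys -> Sys -> Sys;
  StR : Sys -> lmodType R;
  St : forall A : Sys, StR A -> Prop;
  St_spans : forall (A : Sys) (v : StR A),
    exists (n : nat) (c : 'I_n -> R) (s : 'I_n -> StR A),
      (forall i, @St A (s i)) /\ v = \sum_(i < n) c i *: s i;
  St_nonempty : forall A : Sys, exists rho : StR A, @St A rho;
  Transf : forall A B : Sys,
    (forall E : Sys, StR (tens A E) -> StR (tens B E)) -> Prop;
  Transf_linear : forall (A B : Sys) T, @Transf A B T ->
    forall (E : Sys) (a : R) (u v : StR (tens A E)),
      T E (a *: u + v) = a *: T E u + T E v
}.

Arguments Sys {R}.
Arguments tens {R}.
Arguments StR {R}.
Arguments St {R} _ {A}.
Arguments Transf {R} _ A B.

Section Defs.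
Variables (R : realType) (O : OPT R).

Definition family (A B : Sys O) :=
  forall E : Sys O, StR O (tens O A E) -> StR O (tens O B E).

Definition lincomb (A B : Sys O) (n : nat) (c : 'I_n -> R)
  (f : 'I_n -> family A B) : family A B :=
  fun E v => \sum_(i < n) c i *: f i E v.

Definition TransfR (A B : Sys O) (F : family A B) : Prop :=
  exists (n : nat) (c : 'I_n -> R) (T : 'I_n -> family A B),
    (forall i, Transf O A B (T i)) /\ F = lincomb c T.

Definition TransfR_finite_dim (A B : Sys O) : Prop :=
  exists (d : nat) (g : 'I_d -> family A B),
    (forall j, TransfR (g j)) /\
    forall F, TransfR F -> exists c : 'I_d -> R, F = lincomb c g.

Definition tomographically_faithful (A B : Sys O) (N : nat)
  (E : 'I_N -> Sys O) (rho : forall i, StR O (tens O A (E i))) : Prop :=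
  forall T T' : family A B, Transf O A B T -> Transf O A B T' ->
    (forall i, T' (E i) (rho i) = T (E i) (rho i)) -> T' = T.

End Defs.

From Pilot Require Import Defs.
From mathcomp Require Import all_boot all_order all_algebra.
From mathcomp Require Import reals.
From Stdlib Require Import FunctionalExtensionality Classical.
From Stdlib Require List.
Set Implicit Arguments. Unset Strict Implicit. Unset Printing Implicit Defensive.
Import Order.TTheory GRing.Theory Num.Theory.
Local Open Scope ring_scope.

(* Fix a spanning family g_1, ..., g_d of Transf_R(A -> B).  For a state
   rho of A (x) E, the coefficient vectors c in R^d with (sum_j c_j g_j)(rho) = 0
   form a subspace of R^d.  As every sum_j c_j g_j is linear and states span,
   the intersection of these subspaces over all states consists of the c with
   sum_j c_j g_j = 0.  Adding states one at a time strictly lowers the rank of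
   the intersection until it stabilises, so finitely many states already cut
   it out; if T and T' agree on them, T' - T = sum_j c_j g_j for such a c,
   hence T' = T. *)

Section SubspacePredicates.
Variables (R : fieldType) (d : nat).

Definition subspace_pred (P : 'rV[R]_d -> Prop) :=
  P 0 /\ forall a u v, P u -> P v -> P (a *: u + v).

Lemma subspace_pred_addsmx (P : 'rV[R]_d -> Prop) (M : 'M[R]_d) (c : 'rV[R]_d) :
  subspace_pred P -> (forall x, (x <= M)%MS -> P x) -> P c ->
  forall x, (x <= M + c)%MS -> P x.
Proof.
move=> [P0 PD] PM Pc x /sub_addsmxP [[u a] ->] /=.
rewrite [a]mx11_scalar mul_scalar_mx addrC.
by apply: PD => //; apply/PM/submxMl.
Qed.

Lemma subspace_pred_rowspace (P : 'rV[R]_d -> Prop) :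
  subspace_pred P -> exists M : 'M[R]_d, forall c, P c <-> (c <= M)%MS.
Proof.
move=> sP; suff grow (M : 'M[R]_d) : (forall x, (x <= M)%MS -> P x) ->
    exists M' : 'M[R]_d, forall c, P c <-> (c <= M')%MS.
  by apply: (grow 0) => x; rewrite submx0 => /eqP->; case: sP.
have [n] := ubnP (d - \rank M); elim: n => // n IHn in M *; rewrite ltnS => le_corank PM.
case: (classic (exists2 c, P c & ~~ (c <= M)%MS)) => [[c Pc notMc] | no_new]; last first.
  exists M => c; split => [Pc | /PM //]; apply: contraT => notMc.
  by case: no_new; exists c.
have lt_rank : (\rank M < \rank (M + c)%MS)%N.
  by apply: rank_ltmx; rewrite ltmxE addsmxSl addsmx_sub submx_refl.
apply: (IHn (M + c)%MS); last exact: subspace_pred_addsmx.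
by rewrite (leq_trans _ le_corank) // ltn_sub2l // (leq_trans lt_rank) ?rank_leq_col.
Qed.

Variables (W : Type) (P : W -> 'rV[R]_d -> Prop).
Hypothesis sP : forall w, subspace_pred (P w).

Definition holds_on (ws : list W) (c : 'rV[R]_d) := forall w, List.In w ws -> P w c.

Definition determining (ws : list W) := forall c, holds_on ws c -> forall w, P w c.

Lemma subspace_pred_holds_on ws : subspace_pred (holds_on ws).
Proof.
split=> [w _ | a u v Pu Pv w ws_w]; first by case: (sP w).
by case: (sP w) => _; apply; [apply: Pu | apply: Pv].
Qed.

Lemma holds_on_refine ws (M : 'M[R]_d) c w :
    (forall x, holds_on ws x <-> (x <= M)%MS) -> holds_on ws c -> ~ P w c ->
  exists M' : 'M[R]_d,
    (forall x, holds_on (w :: ws) x <-> (x <= M')%MS) /\ (\rank M' < \rank M)%N.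
Proof.
move=> holdsM ws_c notPwc.
have [M' holdsM'] := subspace_pred_rowspace (subspace_pred_holds_on (w :: ws)).
exists M'; split => //; apply: rank_ltmx; rewrite ltmxE.
have -> : (M' <= M)%MS.
  apply/row_subP => i; apply/holdsM => v ws_v.
  exact: (holdsM' _).2 (row_sub i M') v (or_intror ws_v).
apply/negP => M_M'; apply: notPwc.
exact: (holdsM' c).2 (submx_trans ((holdsM c).1 ws_c) M_M') w (or_introl erefl).
Qed.

Lemma exists_determining : exists ws, determining ws.
Proof.
suff shrink ws (M : 'M[R]_d) : (forall x, holds_on ws x <-> (x <= M)%MS) ->
    exists ws', determining ws'.
  have [M holds_nil] := subspace_pred_rowspace (subspace_pred_holds_on [::]).
  exact: shrink holds_nil.
have [n] := ubnP (\rank M); elim: n => // n IHn in ws M *; rewrite ltnS => le_rank holdsM.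
case: (classic (exists2 c, holds_on ws c & exists w, ~ P w c)) =>
  [[c ws_c [w notPwc]] | done].
  have [M' [holdsM' lt_rank]] := holds_on_refine holdsM ws_c notPwc.
  exact: IHn (w :: ws) M' (leq_trans lt_rank le_rank) holdsM'.
exists ws => c ws_c w; apply: NNPP => notPwc.
by apply: done; exists c => //; exists w.
Qed.

End SubspacePredicates.

Section TransformationFamilies.
Variables (R : realType) (O : OPT R) (A B : Sys O).

Definition linear_family (F : Defs.family A B) :=
  forall E a u v, F E (a *: u + v) = a *: F E u + F E v.

Lemma linear_family_lincomb n (c : 'I_n -> R) (f : 'I_n -> Defs.family A B) :
  (forall i, linear_family (f i)) -> linear_family (lincomb c f).
Proof.
move=> lin_f E a u v; rewrite /lincomb scaler_sumr -big_split /=.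
by apply: eq_bigr => i _; rewrite lin_f scalerDr !scalerA mulrC.
Qed.

Lemma TransfR_linear F : TransfR F -> linear_family F.
Proof.
move=> [n [c [T [T_Transf ->]]]]; apply: linear_family_lincomb => i.
exact: Transf_linear (T_Transf i).
Qed.

Lemma linear_family_sum F E n (c : 'I_n -> R) (s : 'I_n -> StR O (tens O A E)) :
  linear_family F -> F E (\sum_(i < n) c i *: s i) = \sum_(i < n) c i *: F E (s i).
Proof.
move=> linF; have F0 : F E 0 = 0.
  by apply: (@addrI _ (F E 0)); rewrite addr0 -{1}(scale1r (F E 0)) -linF scale1r addr0.
elim: n c s => [|n IHn] c s; first by rewrite !big_ord0.
by rewrite !big_ord_recl linF IHn.
Qed.

Lemma linear_family_eq0 F : linear_family F ->
    (forall E (rho : StR O (tens O A E)), St O rho -> F E rho = 0) ->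
  forall E v, F E v = 0.
Proof.
move=> linF F_St E v; have [n [c [s [St_s ->]]]] := St_spans v.
by rewrite linear_family_sum //; apply: big1 => i _; rewrite F_St ?scaler0.
Qed.

Lemma TransfR_sub T T' : Transf O A B T -> Transf O A B T' ->
  TransfR ((fun E v => T' E v - T E v) : Defs.family A B).
Proof.
move=> TT TT'; exists 2, (fun k => if val k == 0%N then 1 else -1).
exists (fun k => if val k == 0%N then T' else T); split=> [k | ]; first by case: ifP.
apply: functional_extensionality_dep => E; apply: functional_extensionality => v.
by rewrite /lincomb big_ord_recl big_ord1 /= scale1r scaleN1r.
Qed.

Definition ancilla_state := {E : Sys O & {rho : StR O (tens O A E) | St O rho}}.

Definition vanishes_at d (g : 'I_d -> Defs.family A B) (w : ancilla_state)
  (c : 'rV[R]_d) := lincomb (c 0) g (sval (projT2 w)) = 0.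

Lemma subspace_pred_vanishes_at d (g : 'I_d -> Defs.family A B) w :
  subspace_pred (vanishes_at g w).
Proof.
rewrite /vanishes_at /lincomb; split=> [|a u v Pu Pv].
  by apply: big1 => j _; rewrite mxE scale0r.
under eq_bigr do rewrite !mxE scalerDl -scalerA.
by rewrite big_split /= -scaler_sumr Pu Pv scaler0 addr0.
Qed.

Lemma determining_states_faithful d (g : 'I_d -> Defs.family A B) ws :
    (forall j, TransfR (g j)) -> (forall F, TransfR F -> exists c, F = lincomb c g) ->
    determining (vanishes_at g) ws ->
  forall T T', Transf O A B T -> Transf O A B T' ->
    (forall w, List.In w ws -> T' _ (sval (projT2 w)) = T _ (sval (projT2 w))) ->
  T' = T.
Proof.
move=> g_TransfR g_span ws_det T T' TT TT' eq_ws.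
have [c diff_c] := g_span _ (TransfR_sub TT TT').
have c_row : (\row_j c j) 0 = c by apply: functional_extensionality => j; rewrite mxE.
have vanish w : vanishes_at g w (\row_j c j).
  apply: ws_det => v ws_v.
  by rewrite /vanishes_at c_row -diff_c /= eq_ws // subrr.
have lin_c : linear_family (lincomb c g).
  by apply: linear_family_lincomb => j; apply: TransfR_linear.
apply: functional_extensionality_dep => E; apply: functional_extensionality => v.
apply: subr0_eq; have -> : T' E v - T E v = lincomb c g v by rewrite -diff_c.
apply: linear_family_eq0 lin_c _ E v => E' rho St_rho.
by have := vanish (existT _ E' (exist _ rho St_rho)); rewrite /vanishes_at c_row.
Qed.

End TransformationFamilies.

Theorem mainTheorem8 (R : realType) (O : OPT R) (A B : Sys O) :
  @TransfR_finite_dim R O A B ->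
  exists (N : nat) (E : 'I_N -> Sys O)
         (rho : forall i : 'I_N, StR O (tens O A (E i))),
    (0 < N)%N /\ (forall i, St O (rho i)) /\
    @tomographically_faithful R O A B N E rho.
Proof.
move=> [d [g [g_TransfR g_span]]].
have [ws ws_det] := exists_determining (subspace_pred_vanishes_at g).
have [rho0 St_rho0] := St_nonempty (tens O A A).
pose w0 : ancilla_state A := existT _ A (exist _ rho0 St_rho0).
pose w i := List.nth i (w0 :: ws) w0.
exists (List.length (w0 :: ws)), (fun i => projT1 (w i)), (fun i => sval (projT2 (w i))).
split=> //; split=> [i | T T' TT TT' eq_w]; first exact: svalP.
apply: (determining_states_faithful (ws := w0 :: ws) g_TransfR g_span _ TT TT').
  move=> c ws_c; apply: ws_det => v ws_v; exact: ws_c v (or_intror ws_v).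
move=> v ws_v.
have [i [/ssrnat.ltP lt_i <-]] := List.In_nth _ _ w0 ws_v.
exact: eq_w (Ordinal lt_i).
Qed.
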